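(* Let $n\in\mathbb N$, $\epsilon\in[0,1)$, $\beta>0$, $\tau\in[0,1]$, and let $\mu$ be the uniform measure over $\mathbb F_2^n$. For $z\in\mathbb F_2^n$ define the loss function $l^z:\mathbb F_2^n\to[0,1]$, $l^z(y)=L(\mathrm d_{\mathrm{tr}}(|y\rangle\langle y|,|z\rangle\langle z|))=1-|\langle y|z\rangle|$ with $L(x)=1-\sqrt{1-x^2}$. Any (deterministic) algorithm that, given access to $\mathrm{Eval}_\tau(l^z)$ for unknown $z$, outputs some $y$ with $l^z(y)\le\epsilon$ for a set of $z$ of $\mu$-measure at least $\beta$, requires at least $(\beta-2^{-n})2^n$ queries. In particular, every loss function $l^z$, $z\in\mathbb F_2^n$, admits a narrow gorge with respect to the uniform measure over $\mathbb F_2^n$.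
   Context: $\mathrm d_{\mathrm{tr}}(\rho,\sigma)=\frac12\|\rho-\sigma\|_{\mathrm{tr}}$. The oracle $\mathrm{Eval}_\tau(l)$, queried with $y$, returns some value $v$ with $|v-l(y)|\le\tau$ (any such value). A family of loss functions $l^{(n)}:\Theta^{(n)}\to\mathbb R$ with measures $\nu^{(n)}$ on $\Theta^{(n)}$ admits a narrow gorge if (i) $\mathbb E_{\vartheta\sim\nu^{(n)}}[l^{(n)}(\vartheta)]-\min_\vartheta l^{(n)}(\vartheta)=\Omega(1/\mathrm{poly}(n))$ and (ii) for every $\delta>0$, $\Pr_{\vartheta\sim\nu^{(n)}}[|l^{(n)}(\vartheta)-\mathbb E_{\nu^{(n)}}[l^{(n)}]|>\delta]\le2^{-\Omega(n)}/\delta^2$. *)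

From HB Require Import structures.
From mathcomp Require Import all_boot all_order all_algebra.
From mathcomp Require Import all_classical all_reals all_analysis.
Set Implicit Arguments. Unset Strict Implicit. Unset Printing Implicit Defensive.
Import Order.TTheory GRing.Theory Num.Theory.
Local Open Scope ring_scope.

Notation bits n := 'rV['F_2]_n.

Section Defs.
Variable R : realType.

(* computational basis state |y>, as a real amplitude vector indexed by F_2^n *)
Definition ket n (y : bits n) : {ffun bits n -> R} :=
  [ffun x : bits n => (x == y)%:R].

Definition braket n (y z : bits n) : R := \sum_(x : bits n) ket y x * ket z x.

Definition lossz n (z : bits n) (y : bits n) : R := 1 - `|braket y z|.

Definition uniform_pmf (T : finType) (x : T) : R := (#|T|%:R)^-1.

(* The oracle Eval_tau(l): on query y it may return any v with |v - l y| <= tau *)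
Definition eval_ok (X : Type) (tau : R) (l : X -> R) (y : X) (v : R) : Prop :=
  `|v - l y| <= tau.

(* A deterministic adaptive algorithm making q queries to an oracle over X:
   the next query is a function of the answers received so far, and the final
   output is a function of all q answers. *)
Record algorithm (X : Type) := Algorithm {
  alg_query : seq R -> X;
  alg_output : seq R -> X }.

Definition valid_transcript (X : Type) (A : algorithm X) (q : nat)
  (tau : R) (l : X -> R) (ans : seq R) : Prop :=
  size ans = q /\
  forall i, (i < q)%N -> eval_ok tau l (alg_query A (take i ans)) (nth 0 ans i).

Definition alg_succeeds n (A : algorithm (bits n)) (q : nat) (tau eps : R)
  (z : bits n) : Prop :=
  forall ans, valid_transcript A q tau (lossz z) ans ->
    lossz z (alg_output A ans) <= eps.

Definition expect (T : finType) (nu : T -> R) (l : T -> R) : R :=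
  \sum_(x : T) nu x * l x.

Definition prob_dev (T : finType) (nu : T -> R) (l : T -> R) (delta : R) : R :=
  \sum_(x : T | delta < `|l x - expect nu l|) nu x.

Definition is_min (T : Type) (l : T -> R) (m : R) : Prop :=
  (exists x, l x = m) /\ forall x, m <= l x.

Definition narrow_gorge (Theta : nat -> finType)
  (nu : forall n, Theta n -> R) (l : forall n, Theta n -> R) : Prop :=
  (exists (C : R) (k N : nat), 0 < C /\
     forall n, (N <= n)%N -> forall m, is_min (l n) m ->
       C / (n%:R ^+ k) <= expect (nu n) (l n) - m) /\
  (exists (c C : R) (N : nat), 0 < c /\ 0 < C /\
     forall n, (N <= n)%N -> forall delta : R, 0 < delta ->
       prob_dev (nu n) (l n) delta <= C * (2 `^ (- (c * n%:R))) / delta ^+ 2).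

End Defs.

(** Against a basis state |z>, the loss l^z is the indicator of [y != z]: a
    needle in a haystack.  An adversarial oracle answering 1 is exact at every
    point other than z, so as long as z is not queried the answers carry no
    information, and a deterministic algorithm can only succeed on its q
    queries and its output along that transcript: at most q + 1 strings,
    i.e. beta 2^n <= q + 1.  Under the uniform measure l^z is a Bernoulli
    variable with mean 1 - 2^-n, minimum 0 and variance 2^-n (1 - 2^-n), so
    the gap to the minimum is at least 1/2 and Chebyshev's inequality gives
    the concentration bound 2^-n / delta^2. *)

From HB Require Import structures.
From mathcomp Require Import all_boot all_order all_algebra.
From mathcomp Require Import all_classical all_reals all_analysis.
From mathcomp Require Import ring lra.
Set Implicit Arguments. Unset Strict Implicit. Unset Printing Implicit Defensive.
Import Order.TTheory GRing.Theory Num.Theory.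
Local Open Scope ring_scope.

Section NeedleQueryComplexity.
Variables (R : realType) (X : finType) (loss : X -> X -> R).
Hypothesis loss_needle : forall z x, x != z -> loss z x = 1.

Definition silent_probes (A : algorithm R X) q : seq X :=
  alg_output A (nseq q 1) :: [seq alg_query A (take i (nseq q 1)) | i <- iota 0 q].

Lemma size_silent_probes A q : size (silent_probes A q) = q.+1.
Proof. by rewrite /= size_map size_iota. Qed.

Lemma valid_all_ones_transcript A q tau z : 0 <= tau ->
  z \notin silent_probes A q -> valid_transcript A q tau (loss z) (nseq q 1).
Proof.
move=> tau_ge0 z_unprobed; split=> [|i lt_iq]; first by rewrite size_nseq.
have query_neq_z : alg_query A (take i (nseq q 1)) != z.
  apply: contraNneq z_unprobed => <-; rewrite inE; apply/orP; right.
  by apply/mapP; exists i; rewrite ?mem_iota.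
by rewrite /eval_ok nth_nseq lt_iq loss_needle // subrr normr0.
Qed.

Lemma solvable_needle_probed A q tau eps z : 0 <= tau -> eps < 1 ->
  (forall ans, valid_transcript A q tau (loss z) ans ->
     loss z (alg_output A ans) <= eps) ->
  z \in silent_probes A q.
Proof.
move=> tau_ge0 eps_lt1 solves; apply: contraT => z_unprobed.
have := solves _ (valid_all_ones_transcript tau_ge0 z_unprobed).
have output_neq_z : alg_output A (nseq q 1) != z.
  by apply: contraNneq z_unprobed => <-; exact: mem_head.
by rewrite loss_needle // => /(lt_le_trans eps_lt1); rewrite ltxx.
Qed.

Lemma card_solvable_needles A q tau eps (S : {set X}) : 0 <= tau -> eps < 1 ->
  (forall z, z \in S -> forall ans, valid_transcript A q tau (loss z) ans ->
     loss z (alg_output A ans) <= eps) ->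
  (#|S| <= q.+1)%N.
Proof.
move=> tau_ge0 eps_lt1 solves.
have /subset_leq_card : S \subset [set x in silent_probes A q].
  apply/fintype.subsetP => z /solves/(solvable_needle_probed tau_ge0 eps_lt1).
  by rewrite inE.
move/leq_trans; apply; rewrite cardsE -(size_silent_probes A q); exact: card_size.
Qed.

End NeedleQueryComplexity.

Section FinitePmf.
Variables (R : realType) (T : finType) (nu : T -> R).

Definition variance (l : T -> R) : R := expect nu (fun x => (l x - expect nu l) ^+ 2).

Lemma chebyshev_prob_dev (l : T -> R) (delta : R) :
  (forall x, 0 <= nu x) -> 0 < delta ->
  prob_dev nu l delta <= variance l / delta ^+ 2.
Proof.
move=> nu_ge0 delta_gt0; rewrite /prob_dev /variance /expect mulr_suml big_mkcond /=.
apply: ler_sum => x _; rewrite -mulrA.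
have ratio_ge0 : 0 <= (l x - expect nu l) ^+ 2 / delta ^+ 2.
  by rewrite divr_ge0 ?sqr_ge0.
case: ifP => [/ltW far|_]; last exact: mulr_ge0 (nu_ge0 x) ratio_ge0.
apply: ler_peMr => //; rewrite ler_pdivlMr ?exprn_gt0 // mul1r.
rewrite -[leRHS]real_normK ?num_real //.
by rewrite lerXn2r // nnegrE ?normr_ge0 ?ltW.
Qed.

Lemma variance_idem (l : T -> R) :
  \sum_x nu x = 1 -> (forall x, l x ^+ 2 = l x) ->
  variance l = expect nu l * (1 - expect nu l).
Proof.
move=> nu_sum1 l_idem; set E := expect nu l.
have sq_dev x : (l x - E) ^+ 2 = l x * (1 - 2 * E) + E ^+ 2.
  by rewrite sqrrB l_idem; ring.
rewrite /variance /expect; under eq_bigr do rewrite sq_dev mulrDr mulrA.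
by rewrite big_split /= -!mulr_suml nu_sum1 -/(expect nu l) -/E; ring.
Qed.

End FinitePmf.

Section UniformPmf.
Variables (R : realType) (T : finType).

Lemma uniform_pmf_ge0 (x : T) : 0 <= uniform_pmf R x.
Proof. by rewrite invr_ge0. Qed.

Lemma sum_uniform_pmf : (0 < #|T|)%N -> \sum_(x : T) uniform_pmf R x = 1.
Proof.
move=> T_gt0; rewrite /uniform_pmf sumr_const -(mulr_natr (#|T|%:R^-1)) mulVf //.
by rewrite pnatr_eq0 -lt0n.
Qed.

Lemma expect_uniform (l : T -> R) :
  expect (@uniform_pmf R T) l = (\sum_x l x) / #|T|%:R.
Proof. by rewrite /expect /uniform_pmf -mulr_sumr mulrC. Qed.

End UniformPmf.

Section BasisStateLoss.
Variables (R : realType) (n : nat).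

Lemma card_bits : #|bits n| = (2 ^ n)%N.
Proof. by rewrite card_mx card_Fp // mul1n. Qed.

Lemma braketE (y z : bits n) : braket R y z = (y == z)%:R.
Proof.
rewrite /braket (bigD1 y) //= big1 ?addr0 => [|x /negbTE x_neq_y].
  by rewrite !ffunE eqxx mul1r eq_sym.
by rewrite !ffunE x_neq_y mul0r.
Qed.

Lemma losszE (z y : bits n) : lossz R z y = (y != z)%:R.
Proof. by rewrite /lossz braketE; case: eqP; rewrite ?normr1 ?normr0 ?subrr ?subr0. Qed.

Lemma lossz_needle (z y : bits n) : y != z -> lossz R z y = 1.
Proof. by rewrite losszE => ->. Qed.

Lemma lossz_sq (z y : bits n) : lossz R z y ^+ 2 = lossz R z y.
Proof. by rewrite losszE; case: (y != z); rewrite ?expr0n ?expr1n. Qed.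

Lemma sum_lossz (z : bits n) : \sum_y lossz R z y + 1 = 2 ^+ n.
Proof.
rewrite (bigD1 z) //= losszE eqxx add0r.
under eq_bigr => y /negPf y_neq_z do rewrite losszE y_neq_z.
by rewrite sumr_const cardC1 -mulrSr prednK ?card_bits ?expn_gt0 // natrX.
Qed.

Lemma expect_uniform_lossz (z : bits n) :
  expect (@uniform_pmf R _) (lossz R z) = 1 - (2 ^+ n)^-1.
Proof.
rewrite expect_uniform card_bits natrX -(sum_lossz z).
have : \sum_y lossz R z y + 1 != 0 by rewrite sum_lossz expf_neq0 ?pnatr_eq0.
by move=> N_neq0; field.
Qed.

Lemma prob_dev_uniform_lossz (z : bits n) (delta : R) : 0 < delta ->
  prob_dev (@uniform_pmf R _) (lossz R z) delta <= (2 ^+ n)^-1 / delta ^+ 2.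
Proof.
move=> delta_gt0.
apply: le_trans (chebyshev_prob_dev _ (@uniform_pmf_ge0 R _) delta_gt0) _.
rewrite variance_idem ?sum_uniform_pmf ?card_bits ?expn_gt0 //; last exact: lossz_sq.
rewrite expect_uniform_lossz ler_wpM2r ?invr_ge0 ?sqr_ge0 //.
have p_ge0 : 0 <= (2 ^+ n : R)^-1 by rewrite invr_ge0 exprn_ge0.
nra.
Qed.

End BasisStateLoss.

Lemma query_lower_bound (R : realType) n (eps beta tau : R) q
    (A : algorithm R (bits n)) (S : {set bits n}) :
  eps < 1 -> 0 <= tau -> (forall z, z \in S -> alg_succeeds A q tau eps z) ->
  beta <= #|S|%:R / 2 ^+ n ->
  (beta - (2 ^+ n)^-1) * 2 ^+ n <= q%:R.
Proof.
move=> eps_lt1 tau_ge0 solves dense.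
have card_S : (#|S| <= q.+1)%N.
  apply: (card_solvable_needles (@lossz_needle R n) tau_ge0 eps_lt1) => z /solves.
  exact.
have pow2_gt0 : (0 : R) < 2 ^+ n by rewrite exprn_gt0.
rewrite mulrBl mulVf ?gt_eqF // lerBlDr natr1.
by apply: le_trans (_ : #|S|%:R <= _); rewrite -?ler_pdivlMr ?ler_nat.
Qed.

Theorem mainTheorem13 (R : realType) :
  (forall (n : nat) (eps beta tau : R),
     0 <= eps -> eps < 1 -> 0 < beta -> 0 <= tau -> tau <= 1 ->
     forall (q : nat) (A : algorithm R (bits n)),
       (exists S : {set bits n},
          (forall z, z \in S -> alg_succeeds A q tau eps z) /\
          beta <= #|S|%:R / (2 ^+ n)) ->
       (beta - (2 ^+ n)^-1) * 2 ^+ n <= q%:R) /\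
  (forall z : forall n, bits n,
     @narrow_gorge R (fun n => 'rV['F_2]_n) (fun n => @uniform_pmf R _)
       (fun n => @lossz R n (z n))).
Proof.
split=> [n eps beta tau _ eps_lt1 _ tau_ge0 _ q A [S [solves dense]] | z].
  exact: query_lower_bound eps_lt1 tau_ge0 solves dense.
split.
  exists 2^-1, 0%N, 1%N; split=> [|n n_ge1 m [_ min_le]]; first by rewrite invr_gt0.
  have m_le0 : m <= 0 by have := min_le (z n); rewrite losszE eqxx.
  have inv_pow2_le_half : (2 ^+ n : R)^-1 <= 2^-1.
    by rewrite lef_pV2 ?posrE ?exprn_gt0 // -[leLHS]expr1 ler_eXn2l // ltr1n.
  rewrite expr0 divr1 expect_uniform_lossz; lra.
exists 1, 1, 0%N; do 2!split=> //; move=> n _ delta delta_gt0.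
rewrite !mul1r powRN powR_mulrn //.
exact: prob_dev_uniform_lossz.
Qed.
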